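(* Let $m,n\in\frac1T\mathbb N$. For homogeneous $a,b\in V$, $i\in\mathbb Q$ and $j\in\mathbb Z$, $$\mathrm{Res}_x(1+x)^ix^jY(b,x)a\equiv(-1)^{j+1}\mathrm{Res}_x(1+x)^{\mathrm{wt}\,a+\mathrm{wt}\,b+m-n-2-i-j}x^jY(a,x)b\pmod{O^T_{0,n,m}(V)}.$$
   Context: $T$ is a positive integer and $V$ is a vertex algebra (vertex operator $Y(a,x)=\sum_{i\in\mathbb Z}a_ix^{-i-1}$, vacuum $\mathbf 1$) with a grading $V=\bigoplus_{i\ge\Delta}V_i$, $\Delta\in\mathbb Z_{\le0}$, such that $\mathbf 1\in V_0$ and $a_iV_j\subset V_{\mathrm{wt}a-1-i+j}$ for homogeneous $a$ ($\mathrm{wt}\,a=k$ for $a\in V_k$). $\mathrm{Res}_x$ is the coefficient of $x^{-1}$ and $(1+x)^c$ is the binomial series in nonnegative powers of $x$. $O^T_{0,n,m}(V)$ is the span of $a_{-2}\mathbf 1+(\mathrm{wt}\,a+m-n)a$ over homogeneous $a\in V$. *)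

From HB Require Import structures.
From mathcomp Require Import all_boot all_order all_algebra.
From Stdlib Require Import ClassicalEpsilon.
Set Implicit Arguments. Unset Strict Implicit. Unset Printing Implicit Defensive.
Import Order.TTheory GRing.Theory Num.Theory.
Local Open Scope ring_scope.

Definition gbin (F : fieldType) (c : F) (k : nat) : F :=
  (\prod_(l < k) (c - l%:R)) / (k`!)%:R.

(* Sum of a finitely supported series  \sum_{k >= 0} f k  (the value is only
   meaningful when f k = 0 for k large, which is always the case below). *)
Definition fsum (V : zmodType) (f : nat -> V) : V :=
  let N := epsilon (inhabits 0%N) (fun N => forall k, (N <= k)%N -> f k = 0) in
  \sum_(k < N) f k.

(* A vertex algebra over F: Y(a,x)b = \sum_i (mode a i b) x^{-i-1},
   axioms: bilinearity, truncation, vacuum axioms, Borcherds identity. *)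
Record vertex_algebra (F : fieldType) (V : lmodType F) := VertexAlgebra {
  mode : V -> int -> V -> V;
  vac : V;
  mode_linl : forall (x : F) a a' i b,
      mode (x *: a + a') i b = x *: mode a i b + mode a' i b;
  mode_linr : forall (x : F) a i b b',
      mode a i (x *: b + b') = x *: mode a i b + mode a i b';
  mode_trunc : forall a b, exists N : int, forall i, N <= i -> mode a i b = 0;
  vac_mode : forall i a, mode vac i a = if i == -1 then a else 0;
  mode_vac_m1 : forall a, mode a (-1) vac = a;
  mode_vac_pos : forall a i, 0 <= i -> mode a i vac = 0;
  borcherds : forall (p q r : int) a b c,
      fsum (fun k : nat => gbin (p%:~R) k *: mode (mode a (r + k%:Z) b) (p + q - k%:Z) c)
      = fsum (fun k : nat => ((-1) ^+ k * gbin (r%:~R) k) *: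
                              mode a (p + r - k%:Z) (mode b (q + k%:Z) c))
        - fsum (fun k : nat => ((-1) ^+ k * (-1) ^ r * gbin (r%:~R) k) *:
                              mode b (q + r - k%:Z) (mode a (p + k%:Z) c))
}.

(* Grading V = \bigoplus_{i >= Delta} V_i, with Vg k the subspace V_k,
   1 \in V_0 and a_i V_j \subset V_{wt a - 1 - i + j}. *)
Record is_grading (F : fieldType) (V : lmodType F) (VA : vertex_algebra V)
    (Vg : int -> V -> Prop) (Delta : int) : Prop := IsGrading {
  gr_sub0 : forall k, Vg k 0;
  gr_subD : forall k (x : F) u v, Vg k u -> Vg k v -> Vg k (x *: u + v);
  gr_low : forall k v, k < Delta -> Vg k v -> v = 0;
  gr_span : forall v, exists (s : seq int) (f : int -> V),
      uniq s /\ (forall k, Vg k (f k)) /\ v = \sum_(k <- s) f k;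
  gr_indep : forall (s : seq int) (f : int -> V),
      uniq s -> (forall k, Vg k (f k)) -> \sum_(k <- s) f k = 0 ->
      forall k, k \in s -> f k = 0;
  gr_vac : Vg 0 (vac VA);
  gr_mode : forall ka kb a b i, Vg ka a -> Vg kb b ->
      Vg (ka - 1 - i + kb) (mode VA a i b)
}.

(* Membership in O^T_{0,n,m}(V): linear span of a_{-2}1 + (wt a + m - n) a,
   a homogeneous (a \in V_k, wt a = k). *)
Definition inO (F : fieldType) (V : lmodType F) (VA : vertex_algebra V)
    (Vg : int -> V -> Prop) (m n : rat) (v : V) : Prop :=
  exists s : seq (F * int * V),
    (forall t, t \in s -> Vg t.1.2 t.2) /\
    v = \sum_(t <- s) t.1.1 *: (mode VA t.2 (-2) (vac VA)
                                 + ratr (t.1.2%:~R + m - n) *: t.2).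

(* Res_x (1+x)^c x^j Y(b,x) a  =  \sum_{k>=0} binom(c,k) b_{j+k} a *)
Definition resY (F : fieldType) (V : lmodType F) (VA : vertex_algebra V)
    (c : F) (j : int) (b a : V) : V :=
  fsum (fun k : nat => gbin c k *: mode VA b (j + k%:Z) a).

From HB Require Import structures.
From mathcomp Require Import all_boot all_order all_algebra zify ring.
From Stdlib Require Import ClassicalEpsilon.
Import Order.TTheory GRing.Theory Num.Theory.
Local Open Scope ring_scope.

(* Write c ≡ c' for c - c' ∈ O = O^T_{0,n,m}(V) and κ(w) = w + m - n, so that
   the generators of O say  c_{-2}1 ≡ -κ(w) c  for c of weight w.
   1. Iterating the generator relation with the translation identity
      (c_{-2}1)_{-1-k}1 = (k+1) c_{-2-k}1 gives  c_{-1-k}1 ≡ binom(-κ(w),k) c.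
   2. Skew symmetry b_r a = Σ_l (-1)^{r+1+l} (a_{r+l}b)_{-1-l}1 (a special case
      of the Borcherds identity) then yields, since a_{r+l}b has weight
      wt a + wt b - 1 - r - l,
        b_r a ≡ Σ_l (-1)^{r+1+l} binom(-κ(wt a + wt b - 1 - r - l), l) a_{r+l}b.
   3. Summing against binom(i,k) for r = j + k and collecting the coefficient
      of a_{j+s}b along the antidiagonals k + l = s, the Chu-Vandermonde
      convolution and the reflection (-1)^s binom(x,s) = binom(s-1-x,s) turn
      the coefficient into (-1)^{j+1} binom(wt a + wt b + m - n - 2 - i - j, s). *)

Section CharZeroField.
Variable F : fieldType.
Hypothesis charF : [pchar F] =i pred0.

Lemma natr_neq0 {k : nat} : (0 < k)%N -> k%:R != 0 :> F.
Proof. by have /pcharf0P -> := charF; rewrite -lt0n. Qed.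

Lemma intr_neq0 (z : int) : z != 0 -> z%:~R != 0 :> F.
Proof.
case: z => [k|k] hz; last by rewrite NegzE intrN oppr_eq0 natr_neq0.
by rewrite natr_neq0 // lt0n; apply: contra hz => /eqP ->.
Qed.

Lemma ratr_frac (p q : int) : q != 0 -> ratr (p%:~R / q%:~R) = p%:~R / q%:~R :> F.
Proof.
case: divqP => [_ /eqP // | k x hk _].
by rewrite /ratr !intrM invfM mulrACA mulfV ?intr_neq0 ?mul1r.
Qed.

Lemma ratrB (x y : rat) : ratr (x - y) = ratr x - ratr y :> F.
Proof.
have dx := denq_neq0 x; have dy := denq_neq0 y.
have -> : x - y = (numq x * denq y - numq y * denq x)%:~R / (denq x * denq y)%:~R.
  rewrite -{1}[x]divq_num_den -{1}[y]divq_num_den !(intrB, intrM).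
  by field; rewrite !intr_eq0 dx dy.
rewrite ratr_frac ?mulf_neq0 // /ratr !(intrB, intrM).
by field; rewrite !intr_neq0.
Qed.

Lemma fact_neq0 (k : nat) : (k`!)%:R != 0 :> F.
Proof. exact/natr_neq0/fact_gt0. Qed.

Lemma gbin0 (x : F) : gbin x 0 = 1.
Proof. by rewrite /gbin big_ord0 fact0 divr1. Qed.

Lemma gbin1 (x : F) : gbin x 1 = x.
Proof. by rewrite /gbin big_ord1 subr0 divr1. Qed.

Lemma gbinSr (x : F) k : gbin x k.+1 * k.+1%:R = gbin x k * (x - k%:R).
Proof.
rewrite /gbin big_ord_recr /= factS natrM invfM.
by field; rewrite fact_neq0 addrC natr1 natr_neq0.
Qed.

Lemma gbinSl (x : F) k : gbin x k.+1 = x / k.+1%:R * gbin (x - 1) k.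
Proof.
rewrite /gbin big_ord_recl /= subr0 factS natrM invfM.
rewrite (eq_bigr (fun l : 'I_k => x - 1 - l%:R)) => [|l _]; last first.
  by rewrite /bump /= add1n -natr1 opprD addrAC addrA.
by field; rewrite fact_neq0 addrC natr1 natr_neq0.
Qed.

(* binom(-1,k) = (-1)^k, the coefficients of e^{xD} in skew symmetry. *)
Lemma gbinN1 k : gbin (-1) k = (-1) ^+ k :> F.
Proof.
rewrite /gbin; suff -> : \prod_(l < k) (-1 - l%:R) = (-1) ^+ k * (k`!)%:R :> F.
  by rewrite mulfK ?fact_neq0.
elim: k => [|k IH]; first by rewrite big_ord0 fact0 mulr1.
by rewrite big_ord_recr /= IH factS natrM exprS -natr1; ring.
Qed.

Lemma gbin_reflect (x : F) s : (-1) ^+ s * gbin x s = gbin (s%:R - 1 - x) s.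
Proof.
rewrite /gbin mulrA; congr (_ * _).
rewrite [RHS](reindex_inj rev_ord_inj) -[s in (-1) ^+ s]card_ord -prodrN.
by apply: eq_bigr => l _; rewrite /= natrB ?ltn_ord // -natr1; ring.
Qed.

Lemma gbin_vandermonde (x y : F) s :
  \sum_(k < s.+1) gbin x k * gbin y (s - k) = gbin (x + y) s.
Proof.
elim: s => [|s IH]; first by rewrite big_ord1 !gbin0 mulr1.
apply: (mulIf (natr_neq0 (ltn0Sn s))); rewrite gbinSr -IH mulr_suml.
transitivity (\sum_(k < s.+2) (gbin x k * gbin y (s.+1 - k) * k%:R
    + gbin x k * gbin y (s.+1 - k) * (s.+1 - k)%:R)).
  by apply: eq_bigr => k _; rewrite -mulrDr -natrD subnKC // -ltnS.
rewrite big_split /= big_ord_recl [X in _ + X]big_ord_recr /= subnn.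
rewrite !mulr0 add0r addr0 -big_split mulr_suml; apply: eq_bigr => k _ /=.
have hk : (k <= s)%N by rewrite -ltnS.
rewrite /bump /= add1n subSS subSn //.
transitivity (gbin x k.+1 * k.+1%:R * gbin y (s - k)
   + gbin x k * (gbin y (s - k).+1 * (s - k).+1%:R)); first by ring.
by rewrite !gbinSr natrB //; ring.
Qed.

End CharZeroField.

Section FiniteSums.
Variable V : zmodType.

Lemma sum_ord_trunc {f : nat -> V} {N M : nat} : (N <= M)%N ->
  (forall k, (N <= k)%N -> f k = 0) -> \sum_(k < M) f k = \sum_(k < N) f k.
Proof.
move=> hNM hf; rewrite [RHS](big_ord_widen _ _ hNM) [RHS]big_mkcond /=.
by apply: eq_bigr => k _; case: ltnP => // /hf ->.
Qed.

Lemma fsum_eq (f : nat -> V) N : (forall k, (N <= k)%N -> f k = 0) ->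
  fsum f = \sum_(k < N) f k.
Proof.
move=> hf; rewrite /fsum; set N0 := epsilon _ _.
have h0 : forall k, (N0 <= k)%N -> f k = 0.
  by apply: (epsilon_spec _ (fun N => forall k, (N <= k)%N -> f k = 0)); exists N.
by rewrite -(sum_ord_trunc (leq_maxl N0 N) h0) -(sum_ord_trunc (leq_maxr N0 N) hf).
Qed.

Lemma sum_antidiagonal M (H : nat -> nat -> V) :
    (forall k l, (M <= k + l)%N -> H k l = 0) ->
  \sum_(k < M) \sum_(l < M) H k l = \sum_(s < M) \sum_(k < s.+1) H k (s - k)%N.
Proof.
move=> H0.
have shift (k : 'I_M) :
    \sum_(l < M) H k l = \sum_(0 <= s < M | (k <= s)%N) H k (s - k)%N.
  have hkM : (k <= M)%N by apply: ltnW.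
  rewrite (big_cat_nat (leq0n k) hkM) /= [X in _ = X + _]big_nat_cond.
  rewrite [X in _ = X + _]big1 ?add0r; last first.
    by move=> s /andP [/andP [_ hs]]; rewrite leqNgt hs.
  rewrite -[in RHS](add0n k) big_addn !add0n -(big_mkord xpredT).
  rewrite (big_cat_nat (leq0n (M - k)) (leq_subr k M)) /= [X in _ + X]big1_seq.
    by rewrite addr0; apply: eq_big => [s|s _]; rewrite ?leq_addl ?addnK.
  by move=> l /andP [_]; rewrite mem_index_iota => /andP [hl _]; apply: H0; lia.
rewrite (eq_bigr _ (fun k _ => shift k)).
rewrite -(big_mkord xpredT (fun k => \sum_(0 <= s < M | (k <= s)%N) H k (s - k)%N)).
rewrite (exchange_big_dep_nat predT) //= big_mkord; apply: eq_bigr => s _.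
rewrite -(big_mkord xpredT (fun k => H k (s - k)%N)).
by rewrite (big_nat_widen _ _ _ _ _ (ltn_ord s)); apply: eq_bigl => k; rewrite ltnS.
Qed.

End FiniteSums.

Lemma gbin_skew_convolution (F : fieldType) (charF : [pchar F] =i pred0)
    (V : lmodType F) (x K : F) (u : nat -> V) M :
    (forall s, (M <= s)%N -> u s = 0) ->
  \sum_(k < M) gbin x k *: \sum_(l < M)
      ((-1) ^+ (k + l) * gbin (- (K - (k + l)%:R)) l) *: u (k + l)%N
  = \sum_(s < M) gbin (K - 1 - x) s *: u s.
Proof.
move=> u0; under eq_bigr do rewrite scaler_sumr.
pose H k l := gbin x k *:
  (((-1) ^+ (k + l) * gbin (- (K - (k + l)%:R)) l) *: u (k + l)%N).
rewrite (@sum_antidiagonal _ M H) => [|k l kl]; last by rewrite /H u0 // !scaler0.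
apply: eq_bigr => s _; rewrite /H.
under eq_bigr => k _ do rewrite scalerA subnKC -1?ltnS //.
rewrite -scaler_suml; congr (_ *: _).
under eq_bigr do rewrite mulrCA.
rewrite -mulr_sumr gbin_vandermonde // gbin_reflect //.
by congr gbin; ring.
Qed.

Definition wt_shift (F : fieldType) (m n : rat) (w : int) : F := ratr (w%:~R + m - n).

Section VertexAlgebra.
Context {F : fieldType} {V : lmodType F} (VA : vertex_algebra V).
Hypothesis charF : [pchar F] =i pred0.
Local Notation md := (mode VA).
Local Notation vc := (vac VA).

Lemma mode0l i b : md 0 i b = 0.
Proof.
have := mode_linl VA 1 0 0 i b; rewrite scaler0 addr0 scale1r => h.
by apply: (addrI (md 0 i b)); rewrite addr0 -h.
Qed.

Lemma mode0r a i : md a i 0 = 0.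
Proof.
have := mode_linr VA 1 a i 0 0; rewrite scaler0 addr0 scale1r => h.
by apply: (addrI (md a i 0)); rewrite addr0 -h.
Qed.

Lemma mode_trunc_shift a b (j : int) :
  exists M : nat, forall k, (M <= k)%N -> md a (j + k%:Z) b = 0.
Proof.
have [N hN] := mode_trunc VA a b.
by exists `|N - j|%N => k hk; apply: hN; lia.
Qed.

(* Translation: with Dc = c_{-2}1, (Dc)_{-1-k}1 = (k+1) c_{-2-k}1; this is the
   Borcherds identity for the triple (c, 1, 1). *)
Lemma mode_D_vac c k :
  md (md c (-2) vc) (- 1 - k%:Z) vc = (k.+1)%:R *: md c (-2 - k%:Z) vc.
Proof.
have := borcherds VA (-1 - k%:Z) 0 (-2) c vc vc.
rewrite (@fsum_eq _ _ 2); last first.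
  by move=> l hl; rewrite (mode_vac_pos VA c) ?mode0l ?scaler0 //; lia.
rewrite (@fsum_eq _ _ 0); last first.
  by move=> l _; rewrite vac_mode (_ : (0 + l%:Z == -1) = false) ?mode0r ?scaler0.
rewrite (@fsum_eq _ _ 0); last first.
  move=> l _; rewrite vac_mode (_ : (0 - 2 - l%:Z == -1) = false) ?scaler0 //.
  by apply: negbTE; lia.
rewrite !big_ord0 subr0 big_ord_recr big_ord1 /= gbin0 gbin1 scale1r.
rewrite mode_vac_m1 addr0 !subr0.
have -> : -1 - k%:Z - 1 = -2 - k%:Z by lia.
have -> : -1 - k%:Z = - (k.+1)%:Z by lia.
by rewrite intrN scaleNr => /eqP; rewrite addr_eq0 opprK => /eqP ->.
Qed.

Lemma sign_sqr (r : int) : (-1) ^ r * (-1) ^ r = 1 :> F.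
Proof. by rewrite -exprzMl ?unitrN1 // mulrNN mulr1 exp1rz. Qed.

(* Skew symmetry Y(b,x)a = e^{xD}Y(a,-x)b in modes:
   b_r a = Σ_k (-1)^{r+1+k} (a_{r+k}b)_{-1-k}1; Borcherds identity with c = 1. *)
Lemma skew_symmetry a b r M : (forall k, (M <= k)%N -> md a (r + k%:Z) b = 0) ->
  md b r a = \sum_(k < M) ((-1) ^ (r + 1) * (-1) ^+ k) *:
                 md (md a (r + k%:Z) b) (-1 - k%:Z) vc.
Proof.
move=> hM; have := borcherds VA (-1) 0 r a b vc.
rewrite (@fsum_eq _ _ M); last by move=> k hk; rewrite hM ?mode0l ?scaler0.
rewrite (@fsum_eq _ _ 0); last first.
  by move=> k _; rewrite (mode_vac_pos VA b) ?mode0r ?scaler0 //; lia.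
rewrite (@fsum_eq _ _ 1); last first.
  by move=> k hk; rewrite (mode_vac_pos VA a) ?mode0r ?scaler0 //; lia.
rewrite big_ord0 big_ord1 sub0r /= expr0 mul1r gbin0 mulr1 addr0 subr0 mode_vac_m1.
under eq_bigr do rewrite intrN gbinN1 //.
rewrite add0r => borch; under eq_bigr do rewrite -scalerA.
rewrite -scaler_sumr borch scalerN -scaleNr scalerA expfzDr ?oppr_eq0 ?oner_eq0 //.
by rewrite expr1z mulrN1 opprK sign_sqr scale1r.
Qed.

Context {Vg : int -> V -> Prop} {Delta : int} {m n : rat}.
Hypothesis hgr : is_grading VA Vg Delta.
Local Notation O := (inO VA Vg m n).
Local Notation kappa := (wt_shift F m n).

Lemma O0 : O 0.
Proof. by exists [::]; split => //; rewrite big_nil. Qed.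

Lemma OD u v : O u -> O v -> O (u + v).
Proof.
move=> [s1 [h1 ->]] [s2 [h2 ->]]; exists (s1 ++ s2); split; last by rewrite big_cat.
by move=> t; rewrite mem_cat => /orP [/h1|/h2].
Qed.

Lemma OZ (x : F) u : O u -> O (x *: u).
Proof.
move=> [s [h ->]]; exists [seq (x * t.1.1, t.1.2, t.2) | t <- s]; split.
  by move=> t /mapP [t' /h ht ->].
by rewrite big_map scaler_sumr; apply: eq_bigr => t _; rewrite scalerA.
Qed.

Lemma O_sum (I : Type) (r : seq I) (P : pred I) (f : I -> V) :
  (forall i, P i -> O (f i)) -> O (\sum_(i <- r | P i) f i).
Proof. by move=> h; apply: big_ind => //; [exact: O0 | exact: OD]. Qed.

Lemma O_gen w c : Vg w c -> O (md c (-2) vc + kappa w *: c).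
Proof.
move=> h; exists [:: (1, w, c)]; split; first by move=> t; rewrite inE => /eqP ->.
by rewrite big_seq1 scale1r.
Qed.

Lemma wt_shiftD w (z : int) : kappa (w + z) = kappa w + z%:~R.
Proof.
have -> : kappa w = ratr (((w + z)%:~R + m - n) - z%:~R).
  by congr ratr; rewrite intrD; ring.
by rewrite ratrB // ratr_int subrK.
Qed.

(* Step 1: c_{-1-k}1 ≡ binom(-κ(w),k) c for c of weight w, by induction on k,
   applying the hypothesis to c_{-2}1 (of weight w+1) and then O_gen. *)
Lemma vac_descendant_mod_O k w c : Vg w c ->
  O (md c (-1 - k%:Z) vc - gbin (- kappa w) k *: c).
Proof.
elim: k w c => [|k IH] w c hc.
  by rewrite subr0 mode_vac_m1 gbin0 scale1r subrr; exact: O0.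
have hD : Vg (w + 1) (md c (-2) vc).
  have := gr_mode hgr (-2) hc (gr_vac hgr).
  by have -> : w - 1 - (-2) + 0 = w + 1 by lia.
have := IH _ _ hD; rewrite wt_shiftD mulr1z => hIH.
have hgen := O_gen w c hc.
set K := kappa w in hIH hgen *.
have -> : md c (-1 - k.+1%:Z) vc - gbin (-K) k.+1 *: c = (k.+1%:R)^-1 *:
   ((md (md c (-2) vc) (-1 - k%:Z) vc - gbin (-(K + 1)) k *: md c (-2) vc)
     + gbin (-(K + 1)) k *: (md c (-2) vc + K *: c)).
  rewrite mode_D_vac gbinSl // !scalerDr scalerN !scalerA mulVf ?natr_neq0 //.
  rewrite scale1r addrA subrK.
  have -> : -1 - k.+1%:Z = -2 - k%:Z by lia.
  rewrite -scaleNr opprD; congr (_ + _ *: _).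
  by rewrite opprD; field; rewrite addrC natr1 natr_neq0.
by apply: OZ; apply: OD => //; apply: OZ.
Qed.

Lemma skew_symmetry_mod_O a b wa wb r M : Vg wa a -> Vg wb b ->
    (forall l, (M <= l)%N -> md a (r + l%:Z) b = 0) ->
  O (md b r a - \sum_(l < M) ((-1) ^ (r + 1) * (-1) ^+ l
       * gbin (- kappa (wa - 1 - (r + l%:Z) + wb)) l) *: md a (r + l%:Z) b).
Proof.
move=> ha hb hM; rewrite (@skew_symmetry a b r M hM) -sumrB; apply: O_sum => l _.
rewrite -[X in _ - X]scalerA -scalerBr; apply: OZ; apply: vac_descendant_mod_O.
exact: (gr_mode hgr _ ha hb).
Qed.

(* Step 2 in the normal form used by step 3: for r = j + k, the element
   a_{j+k+l}b has κ(weight) = κ(wt a + wt b - 1 - j) - (k + l). *)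
Lemma skew_symmetry_mod_O_at a b wa wb (j : int) k M : Vg wa a -> Vg wb b ->
    (forall s, (M <= s)%N -> md a (j + s%:Z) b = 0) ->
  O (md b (j + k%:Z) a - (-1) ^ (j + 1) *: \sum_(l < M)
      ((-1) ^+ (k + l) * gbin (- (kappa (wa + wb - 1 - j) - (k + l)%:R)) l)
        *: md a (j + (k + l)%N%:Z) b).
Proof.
move=> ha hb hM.
have sign : (-1) ^ (j + k%:Z + 1) = (-1) ^ (j + 1) * (-1) ^+ k :> F.
  by rewrite addrAC [LHS]expfzDr ?oppr_eq0 ?oner_eq0.
have shift l : kappa (wa + wb - 1 - j) - (k + l)%:R
    = kappa (wa - 1 - (j + k%:Z + l%:Z) + wb).
  have -> : wa - 1 - (j + k%:Z + l%:Z) + wb = wa + wb - 1 - j + - (k + l)%N%:Z.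
    by rewrite PoszD; ring.
  by rewrite [RHS]wt_shiftD intrN.
have coef l : (-1) ^ (j + 1) * ((-1) ^+ (k + l)
      * gbin (- (kappa (wa + wb - 1 - j) - (k + l)%:R)) l)
    = (-1) ^ (j + k%:Z + 1) * (-1) ^+ l
      * gbin (- kappa (wa - 1 - (j + k%:Z + l%:Z) + wb)) l.
  by rewrite sign shift exprD; ring.
rewrite scaler_sumr.
under eq_bigr => l _ do rewrite scalerA coef PoszD addrA.
apply: skew_symmetry_mod_O => // l hl.
by rewrite -addrA -PoszD hM // (leq_trans hl) ?leq_addl.
Qed.

End VertexAlgebra.

Theorem mainTheorem8 (F : fieldType) (charF : [pchar F] =i pred0)
    (V : lmodType F) (VA : vertex_algebra V)
    (Vg : int -> V -> Prop) (Delta : int) (hDelta : Delta <= 0)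
    (hgr : is_grading VA Vg Delta)
    (T : nat) (hT : (0 < T)%N) (mT nT : nat)
    (a b : V) (wta wtb : int) (ha : Vg wta a) (hb : Vg wtb b)
    (i : rat) (j : int) :
  let m : rat := mT%:R / T%:R in
  let n : rat := nT%:R / T%:R in
  inO VA Vg m n
    (resY VA (ratr i) j b a
     - ((-1) ^ (j + 1) : F) *:
         resY VA (ratr (wta%:~R + wtb%:~R + m - n - 2 - i - j%:~R)) j a b).
Proof.
move=> m n.
have [Mab hab] := mode_trunc_shift VA a b j.
have [Mba hba] := mode_trunc_shift VA b a j.
pose M := maxn Mab Mba.
have habM k : (M <= k)%N -> mode VA a (j + k%:Z) b = 0.
  by move=> hk; apply: hab; apply: leq_trans hk; apply: leq_maxl.
have hbaM k : (M <= k)%N -> mode VA b (j + k%:Z) a = 0.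
  by move=> hk; apply: hba; apply: leq_trans hk; apply: leq_maxr.
rewrite /resY (@fsum_eq _ _ M) => [|k hk]; last by rewrite hbaM ?scaler0.
rewrite (@fsum_eq _ _ M) => [|k hk]; last by rewrite habM ?scaler0.
pose K := wt_shift F m n (wta + wtb - 1 - j).
have -> : ratr (wta%:~R + wtb%:~R + m - n - 2 - i - j%:~R) = K - 1 - ratr i.
  have ratr1 : ratr 1 = 1 :> F := ratr_nat F 1.
  rewrite /K /wt_shift -ratr1 -!ratrB //; congr ratr.
  by rewrite !(intrD, intrB); ring.
rewrite -(@gbin_skew_convolution _ charF _ _ _ (fun s => mode VA a (j + s%:Z) b) _ habM).
rewrite scaler_sumr -sumrB; apply: O_sum => k _.
rewrite [X in _ - X]scalerA [(-1) ^ (j + 1) * _]mulrC -[X in _ - X]scalerA -scalerBr.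
exact/OZ/(skew_symmetry_mod_O_at VA charF hgr).
Qed.
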